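(* Suppose the standing assumptions below hold and $g$ is convex. Let $\bm{x}^{k-1},\bm{x}^k\in C$, $\beta_k\in[0,1)$, and $\bm{y}^k:=\bm{x}^k+\beta_k(\bm{x}^k-\bm{x}^{k-1})\in C$. Let $\hat f_k$ be an auxiliary function of $f$ at $\bm{x}^k$ such that $(\hat f_k,\phi)$ is $L_k$-smad on $C$, let $\lambda_k>0$, and let $$\bm{x}^{k+1}\in\operatorname*{argmin}_{\bm{x}\in\overline C}\Big\{\langle\nabla\hat f_k(\bm{y}^k),\bm{x}-\bm{y}^k\rangle+g(\bm{x})+\tfrac1{\lambda_k}D_\phi(\bm{x},\bm{y}^k)\Big\}$$ with $\bm{x}^{k+1}\in C$. Then $$\lambda_k\Psi(\bm{x}^{k+1})\le\lambda_k\Psi(\bm{x}^k)+(1+\lambda_kL_k)D_\phi(\bm{x}^k,\bm{y}^k)-(1-\lambda_kL_k)D_\phi(\bm{x}^{k+1},\bm{y}^k)-D_\phi(\bm{x}^k,\bm{x}^{k+1}).$$ Furthermore, if $D_\phi(\bm{x}^k,\bm{y}^k)\le\rho\,D_\phi(\bm{x}^{k-1},\bm{x}^k)$ for some $\rho\in(0,1]$ (as guaranteed by the adaptive restart scheme), then for every $M>0$, $$\lambda_k\big(\Psi(\bm{x}^{k+1})+MD_\phi(\bm{x}^k,\bm{x}^{k+1})\big)\le\lambda_k\big(\Psi(\bm{x}^k)+MD_\phi(\bm{x}^{k-1},\bm{x}^k)\big)-(\lambda_kM-\rho(1+\lambda_kL_k))D_\phi(\bm{x}^{k-1},\bm{x}^k)-(1-\lambda_kL_k)D_\phi(\bm{x}^{k+1},\bm{y}^k)-(1-\lambda_kM)D_\phi(\bm{x}^k,\bm{x}^{k+1}).$$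 In particular, if $0<\lambda_kL_k<1$ and $\rho(1+\lambda_kL_k)<\lambda_kM<1$, then $\Psi(\bm{x}^{k+1})+MD_\phi(\bm{x}^k,\bm{x}^{k+1})\le\Psi(\bm{x}^k)+MD_\phi(\bm{x}^{k-1},\bm{x}^k)$.
   Context: Let $C\subset\mathbb{R}^n$ be a nonempty open convex set. A function $\phi:\mathbb{R}^n\to(-\infty,+\infty]$ is a kernel generating distance associated with $C$ (written $\phi\in\mathcal{G}(C)$) if $\phi$ is proper, lower semicontinuous and convex with $\operatorname{dom}\phi\subset\overline{C}$ and $\operatorname{dom}\partial\phi=C$, and $\phi$ is $C^1$ on $\operatorname{int}\operatorname{dom}\phi=C$. The Bregman distance is $D_\phi(\bm{x},\bm{y})=\phi(\bm{x})-\phi(\bm{y})-\langle\nabla\phi(\bm{y}),\bm{x}-\bm{y}\rangle$ for $\bm{x}\in\operatorname{dom}\phi$, $\bm{y}\in C$. For $\phi\in\mathcal{G}(C)$ and $h:\mathbb{R}^n\to(-\infty,+\infty]$ proper, lower semicontinuous, with $\operatorname{dom}\phi\subset\operatorname{dom}h$ and $h$ of class $C^1$ on $C$, the pair $(h,\phi)$ is called $L$-smooth adaptable ($L$-smad) on $C$ if $L>0$ and both $L\phi-h$ and $L\phi+h$ are convex on $C$. Given $\bm{y}\in C$, a function $\hat f:\mathbb{R}^n\to(-\infty,+\infty]$ is an auxiliary function of $f$ at $\bm{y}$ if $\hat f$ is proper, lower semicontinuous, $\operatorname{dom}\phi\subset\operatorname{dom}\hat f$, $\hat f$ is $C^1$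 on $C$, $f(\bm{x})\le\hat f(\bm{x})$ for all $\bm{x}\in C$, $\hat f(\bm{y})=f(\bm{y})$ and $\nabla\hat f(\bm{y})=\nabla f(\bm{y})$. Standing assumptions: the problem is $\min_{\bm{x}\in\overline C}\Psi(\bm{x}):=f(\bm{x})+g(\bm{x})$, where (i) $\phi\in\mathcal{G}(C)$ with $\overline{C}=\overline{\operatorname{dom}\phi}$; (ii) $f:\mathbb{R}^n\to(-\infty,+\infty]$ is proper, lower semicontinuous, $\operatorname{dom}\phi\subset\operatorname{dom}f$, and $f$ is $C^1$ on $C$; (iii) $g:\mathbb{R}^n\to(-\infty,+\infty]$ is proper, lower semicontinuous with $\operatorname{dom}g\cap C\neq\emptyset$; (iv) $\inf_{\overline C}\Psi>-\infty$; (v) $\phi+\lambda g$ is supercoercive for every $\lambda>0$. *)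

From HB Require Import structures.
From mathcomp Require Import all_boot all_order all_algebra.
From mathcomp Require Import all_classical all_reals all_analysis.
Set Implicit Arguments. Unset Strict Implicit. Unset Printing Implicit Defensive.
Import Order.TTheory GRing.Theory Num.Theory.
Import numFieldNormedType.Exports.
Local Open Scope classical_set_scope.
Local Open Scope ring_scope.

Section Defs.
Variables (R : realType) (n : nat).
Local Notation E := 'rV[R]_n.

Definition dotv (u v : E) : R := \sum_(i < n) u 0 i * v 0 i.
Definition enorm (u : E) : R := Num.sqrt (dotv u u).

Definition dom (f : E -> \bar R) : set E := [set x | (f x < +oo)%E].

Definition proper (f : E -> \bar R) : Prop :=
  (forall x, f x != -oo%E) /\ (exists x, (f x < +oo)%E).

Definition econvex (f : E -> \bar R) : Prop :=
  forall (x y : E) (t : R), 0 < t -> t < 1 ->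
    (f (t *: x + (1 - t) *: y)%R <= (t%:E * f x + (1 - t)%:E * f y)%E)%E.

Definition convex_on (C : set E) (F : E -> R) : Prop :=
  forall (x y : E) (t : R), C x -> C y -> 0 <= t -> t <= 1 ->
    F (t *: x + (1 - t) *: y) <= t * F x + (1 - t) * F y.

Definition convex_setE (C : set E) : Prop :=
  forall (x y : E) (t : R), C x -> C y -> 0 <= t -> t <= 1 ->
    C (t *: x + (1 - t) *: y).

Definition grad (F : E -> R) (x : E) : E :=
  \row_(i < n) ('d F x (delta_mx 0 i : E)).

(* gradient of an extended-real valued function (meaningful where finite) *)
Definition egrad (f : E -> \bar R) (x : E) : E := grad (fun z => fine (f z)) x.

Definition C1_on (C : set E) (f : E -> \bar R) : Prop :=
  (forall x, C x -> f x \is a fin_num) /\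
  (forall x, C x -> differentiable (fun z => fine (f z)) x) /\
  (forall x, C x -> {for x, continuous (egrad f)}).

Definition subdiff (f : E -> \bar R) (x : E) : set E :=
  [set v | f x \is a fin_num /\
           forall z, (f x + (dotv v (z - x)%R)%:E <= f z)%E].
Definition dom_subdiff (f : E -> \bar R) : set E :=
  [set x | exists v, subdiff f x v].

Definition kernel_gen_dist (C : set E) (phi : E -> \bar R) : Prop :=
  proper phi /\ lower_semicontinuous phi /\ econvex phi /\
  dom phi `<=` closure C /\ dom_subdiff phi = C /\
  interior (dom phi) = C /\ C1_on C phi.

Definition bregE (phi : E -> \bar R) (x y : E) : \bar R :=
  (phi x + (- fine (phi y) - dotv (egrad phi y) (x - y))%R%:E)%E.
(* Bregman distance as a real number, for x in dom phi and y in C *)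
Definition breg (phi : E -> \bar R) (x y : E) : R :=
  fine (phi x) - fine (phi y) - dotv (egrad phi y) (x - y).

Definition smad (C : set E) (h phi : E -> \bar R) (L : R) : Prop :=
  0 < L /\
  convex_on C (fun x => L * fine (phi x) - fine (h x)) /\
  convex_on C (fun x => L * fine (phi x) + fine (h x)).

Definition auxiliary (C : set E) (phi f fh : E -> \bar R) (y : E) : Prop :=
  proper fh /\ lower_semicontinuous fh /\ dom phi `<=` dom fh /\
  C1_on C fh /\ (forall x, C x -> (f x <= fh x)%E) /\
  fh y = f y /\ egrad fh y = egrad f y.

Definition supercoercive (psi : E -> \bar R) : Prop :=
  forall M : R, exists r : R, forall x, r <= enorm x ->
    ((M * enorm x)%:E <= psi x)%E.

Definition standing (C : set E) (phi f g : E -> \bar R) : Prop :=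
  [/\ kernel_gen_dist C phi /\ closure C = closure (dom phi),
      proper f /\ lower_semicontinuous f /\ dom phi `<=` dom f /\ C1_on C f,
      proper g /\ lower_semicontinuous g /\ (exists x, dom g x /\ C x),
      (exists m : R, forall x, closure C x -> (m%:E <= f x + g x)%E) &
      (forall lam : R, 0 < lam -> supercoercive (fun x => phi x + lam%:E * g x)%E)].

End Defs.

From HB Require Import structures.
From mathcomp Require Import all_boot all_order all_algebra.
From mathcomp Require Import all_classical all_reals all_analysis.
From mathcomp Require Import ring lra.
Set Implicit Arguments. Unset Strict Implicit. Unset Printing Implicit Defensive.
Import Order.TTheory GRing.Theory Num.Theory.
Import numFieldNormedType.Exports.
Local Open Scope classical_set_scope.
Local Open Scope ring_scope.

(* The smad property of (fh, phi) yields the two-sided descent bounds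
     fh x <= fh y + <grad fh y, x - y> + L D(x, y)   and its mirror image,
   and the first-order optimality of x^{k+1} in the convex subproblem, tested
   along the segment from x^{k+1} towards x^k, yields the three-point inequality
     lam (g x^{k+1} - g x^k - <grad fh y, x^k - x^{k+1}>)
       <= D(x^k, y) - D(x^{k+1}, y) - D(x^k, x^{k+1}).
   Adding these, with f <= fh and fh x^k = f x^k, gives the first inequality; the
   restart condition and D >= 0 turn it into the decrease of the Lyapunov
   function Psi + M D(x^{k-1}, x^k). *)

Section Gradients.
Context {R : realType} {n : nat}.
Local Notation E := 'rV[R]_n.

Lemma dotvDr (a u v : E) : dotv a (u + v) = dotv a u + dotv a v.
Proof. by rewrite /dotv -big_split; apply: eq_bigr => i _; rewrite mxE mulrDr. Qed.

Lemma dotvZr (a u : E) (s : R) : dotv a (s *: u) = s * dotv a u.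
Proof. by rewrite /dotv mulr_sumr; apply: eq_bigr => i _; rewrite mxE mulrCA. Qed.

Lemma dotvBr (a u v : E) : dotv a (u - v) = dotv a u - dotv a v.
Proof. by rewrite -scaleN1r dotvDr dotvZr mulN1r. Qed.

Lemma grad_dotv (F : E -> R) x v : dotv (grad F x) v = 'd F x v.
Proof.
rewrite /dotv /grad [in RHS](matrix_sum_delta v) linear_sum big_ord1 linear_sum.
by apply: eq_bigr => i _; rewrite mxE linearZ mulrC.
Qed.

Lemma diff_quotient_cvg (F : E -> R) x v : differentiable F x ->
  (fun t => t^-1 * (F (x + t *: v) - F x)) @ 0^'+ --> dotv (grad F x) v.
Proof.
move=> dF; rewrite grad_dotv -deriveE //.
have /cvg_ex[l dq_l] : derivable F x v by exact: diff_derivable.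
have -> : (fun t => t^-1 * (F (x + t *: v) - F x)) =
    (fun h => h^-1 *: ((F \o shift x) (h *: v) - F x)).
  by apply/funext => h /=; rewrite [x + _]addrC.
by rewrite /derive (cvg_lim _ dq_l) //; exact: cvg_dnbhs_at_right.
Qed.

Lemma diff_quotient_comb_cvg (F G : E -> R) (a b : R) x v :
  differentiable F x -> differentiable G x ->
  (fun t => t^-1 * ((a * F (x + t *: v) + b * G (x + t *: v)) - (a * F x + b * G x)))
    @ 0^'+ --> a * dotv (grad F x) v + b * dotv (grad G x) v.
Proof.
move=> dF dG.
have -> : (fun t => t^-1 * ((a * F (x + t *: v) + b * G (x + t *: v)) - (a * F x + b * G x))) =
    (fun t => a * (t^-1 * (F (x + t *: v) - F x)) + b * (t^-1 * (G (x + t *: v) - G x))).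
  by apply/funext => t; ring.
by apply: cvgD; apply: cvgMl_tmp; exact: diff_quotient_cvg.
Qed.

Lemma segment_param (x z : E) (t : R) : x + t *: (z - x) = t *: z + (1 - t) *: x.
Proof. by rewrite scalerBr scalerBl scale1r addrCA addrA. Qed.

Lemma convex_diff_quotient_le (F : E -> R) x z d :
  (fun t => t^-1 * (F (x + t *: (z - x)) - F x)) @ 0^'+ --> d ->
  (forall t, 0 < t -> t < 1 ->
     F (t *: z + (1 - t) *: x) <= t * F z + (1 - t) * F x) ->
  d <= F z - F x.
Proof.
move=> Fd cvxF.
have ub : \forall t \near 0^'+, t^-1 * (F (x + t *: (z - x)) - F x) <= F z - F x.
  near=> t; have t0 : 0 < t by near: t; exact: nbhs_right_gt.
  have t1 : t < 1 by near: t; apply: nbhs_right_lt; exact: ltr01.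
  by rewrite segment_param ler_pdivrMl //; have := cvxF t t0 t1; lra.
exact: (@closed_cvg _ _ _ (at_right_proper_filter 0) _ _ (closed_le (y := F z - F x))
  ub _ Fd).
Unshelve. all: by end_near. Qed.

End Gradients.

(* Gradients are generalized before calling lra: comparing atoms such as
   dotv (egrad phi y) _ and dotv (egrad phi z) _ by conversion unfolds the
   Frechet differentials and is prohibitively slow. *)
Lemma breg_three_point (R : realType) (n : nat) (phi : 'rV[R]_n -> \bar R) x y z :
  breg phi x y - breg phi z y - breg phi x z =
  dotv (egrad phi z) (x - z) - dotv (egrad phi y) (x - z).
Proof. rewrite /breg; move: (egrad phi y) (egrad phi z) => a b; rewrite !dotvBr; lra. Qed.

Section Bregman.
Context {R : realType} {n : nat}.
Variables (C : set 'rV[R]_n) (phi : 'rV[R]_n -> \bar R).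
Hypotheses (convC : convex_setE C) (phi_fin : forall x, C x -> phi x \is a fin_num)
  (phi_diff : forall x, C x -> differentiable (fun z => fine (phi z)) x).

Lemma bregE_fin x y : C x -> bregE phi x y = (breg phi x y)%:E.
Proof. by move=> Cx; rewrite /bregE /breg -(fineK (phi_fin Cx)) -EFinD addrA. Qed.

Lemma breg_ge0 x y : econvex phi -> C x -> C y -> 0 <= breg phi x y.
Proof.
move=> cvx_phi Cx Cy.
suff : dotv (egrad phi y) (x - y) <= fine (phi x) - fine (phi y) by rewrite /breg; lra.
apply: (convex_diff_quotient_le (diff_quotient_cvg (v := x - y) (phi_diff Cy))) => t t0 t1.
have Ct : C (t *: x + (1 - t) *: y) by apply: convC => //; lra.
have := cvx_phi x y t t0 t1.
by rewrite -(fineK (phi_fin Ct)) -(fineK (phi_fin Cx)) -(fineK (phi_fin Cy))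
  -!EFinM -EFinD lee_fin.
Qed.

Lemma breg_prox_three_point (g : 'rV[R]_n -> \bar R) (a y x1 x : 'rV[R]_n) (lam : R) :
  econvex g -> (forall z, g z != -oo%E) -> 0 < lam ->
  C y -> C x1 -> C x -> g x \is a fin_num -> g x1 \is a fin_num ->
  (forall z, C z ->
     ((dotv a (x1 - y))%:E + g x1 + lam^-1%:E * bregE phi x1 y
      <= (dotv a (z - y))%:E + g z + lam^-1%:E * bregE phi z y)%E) ->
  lam * (fine (g x1) - fine (g x) - dotv a (x - x1))
    <= breg phi x y - breg phi x1 y - breg phi x x1.
Proof.
move=> cvx_g g_ninfty lam0 Cy Cx1 Cx gx_fin gx1_fin opt.
rewrite breg_three_point.
suff : lam * (fine (g x1) - fine (g x) - dotv a (x - x1)) + dotv (egrad phi y) (x - x1)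
    <= dotv (egrad phi x1) (x - x1).
  by move: (egrad phi y) (egrad phi x1) => b c; lra.
set c := lam * _ + _.
have lb : \forall t \near 0^'+,
    c <= t^-1 * (fine (phi (x1 + t *: (x - x1))) - fine (phi x1)).
  near=> t; have t0 : 0 < t by near: t; exact: nbhs_right_gt.
  have t1 : t < 1 by near: t; apply: nbhs_right_lt; exact: ltr01.
  rewrite segment_param; set xt := t *: x + (1 - t) *: x1.
  have Cxt : C xt by apply: convC => //; lra.
  have gxt : (g xt <= (t * fine (g x) + (1 - t) * fine (g x1))%:E)%E.
    by rewrite EFinD !EFinM !fineK //; exact: cvx_g.
  have gxt_fin : g xt \is a fin_num.
    by rewrite fin_numE g_ninfty /=; apply/eqP => gxt_oo; rewrite gxt_oo leye_eq in gxt.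
  rewrite -(fineK gxt_fin) lee_fin in gxt.
  have := opt xt Cxt.
  rewrite !bregE_fin // -(fineK gx1_fin) -(fineK gxt_fin) -!EFinM -!EFinD lee_fin.
  have dotv_xt b : dotv b (xt - y) = dotv b (x1 - y) + t * dotv b (x - x1).
    by rewrite /xt -segment_param addrAC (dotvDr b (x1 - y)) dotvZr.
  rewrite /breg !dotv_xt ler_pdivlMl // /c; move: (egrad phi y) => b op.
  have {}op := ler_wpM2l (ltW lam0) op.
  rewrite !mulrDr !mulrA mulfV ?gt_eqF // !mul1r in op.
  have := ler_wpM2l (ltW lam0) gxt; lra.
exact: (@closed_cvg _ _ _ (at_right_proper_filter 0) _ _ (closed_ge (y := c)) lb _
  (diff_quotient_cvg (v := x - x1) (phi_diff Cx1))).
Unshelve. all: by end_near. Qed.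

Section SmoothAdaptable.
Variables (h : 'rV[R]_n -> \bar R) (L : R).
Hypotheses (smad_h : smad C h phi L)
  (h_diff : forall x, C x -> differentiable (fun z => fine (h z)) x).

Lemma smad_upper_bound x y : C x -> C y ->
  fine (h x) <= fine (h y) + dotv (egrad h y) (x - y) + L * breg phi x y.
Proof.
case: smad_h => _ [cvx_Lh _] Cx Cy.
suff : L * dotv (egrad phi y) (x - y) + -1 * dotv (egrad h y) (x - y)
    <= (L * fine (phi x) + -1 * fine (h x)) - (L * fine (phi y) + -1 * fine (h y)).
  by rewrite /breg; move: (egrad phi y) (egrad h y) => a b; rewrite !mulrBr; lra.
apply: (@convex_diff_quotient_le _ _ (fun z => L * fine (phi z) + -1 * fine (h z))).
  exact: diff_quotient_comb_cvg (phi_diff Cy) (h_diff Cy).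
move=> t t0 t1; rewrite !mulN1r.
exact: cvx_Lh (ltW t0) (ltW t1).
Qed.

Lemma smad_lower_bound x y : C x -> C y ->
  fine (h y) + dotv (egrad h y) (x - y) - L * breg phi x y <= fine (h x).
Proof.
case: smad_h => _ [_ cvx_Lh] Cx Cy.
suff : L * dotv (egrad phi y) (x - y) + 1 * dotv (egrad h y) (x - y)
    <= (L * fine (phi x) + 1 * fine (h x)) - (L * fine (phi y) + 1 * fine (h y)).
  by rewrite /breg; move: (egrad phi y) (egrad h y) => a b; rewrite !mulrBr; lra.
apply: (@convex_diff_quotient_le _ _ (fun z => L * fine (phi z) + 1 * fine (h z))).
  exact: diff_quotient_comb_cvg (phi_diff Cy) (h_diff Cy).
move=> t t0 t1; rewrite !mul1r.
exact: cvx_Lh (ltW t0) (ltW t1).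
Qed.

Lemma inertial_step_descent (f g : 'rV[R]_n -> \bar R) (y xk x1 : 'rV[R]_n) (lam : R) :
  econvex g -> (forall z, g z != -oo%E) -> 0 < lam ->
  C y -> C xk -> C x1 -> g xk \is a fin_num -> g x1 \is a fin_num ->
  fine (f x1) <= fine (h x1) -> fine (h xk) = fine (f xk) ->
  (forall z, C z ->
     ((dotv (egrad h y) (x1 - y))%:E + g x1 + lam^-1%:E * bregE phi x1 y
      <= (dotv (egrad h y) (z - y))%:E + g z + lam^-1%:E * bregE phi z y)%E) ->
  lam * (fine (f x1) + fine (g x1)) <= lam * (fine (f xk) + fine (g xk))
    + ((1 + lam * L) * breg phi xk y - (1 - lam * L) * breg phi x1 y - breg phi xk x1).
Proof.
move=> cvx_g g_ninfty lam0 Cy Cxk Cx1 gxk_fin gx1_fin f_le_h h_eq_f opt.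
have prox := breg_prox_three_point cvx_g g_ninfty lam0 Cy Cx1 Cxk gxk_fin gx1_fin opt.
have up := smad_upper_bound Cx1 Cy; have lo := smad_lower_bound Cxk Cy.
have split_dir : dotv (egrad h y) (xk - x1)
    = dotv (egrad h y) (xk - y) - dotv (egrad h y) (x1 - y).
  by rewrite !dotvBr; lra.
have f_gap : fine (f x1) - fine (f xk) <= - dotv (egrad h y) (xk - x1)
    + L * (breg phi x1 y + breg phi xk y) by lra.
have := ler_wpM2l (ltW lam0) f_gap; lra.
Qed.

End SmoothAdaptable.
End Bregman.

Lemma lyapunov_step (R : realType) (lam L rho M P1 Pk Dky D1y Dk1 Dm : R) :
  0 < lam -> 0 < L -> Dky <= rho * Dm ->
  lam * P1 <= lam * Pk + ((1 + lam * L) * Dky - (1 - lam * L) * D1y - Dk1) ->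
  lam * (P1 + M * Dk1) <= lam * (Pk + M * Dm)
    + (- (lam * M - rho * (1 + lam * L)) * Dm - (1 - lam * L) * D1y - (1 - lam * M) * Dk1).
Proof.
move=> lam0 L0 restart step.
have lamL1 : 0 <= 1 + lam * L by have := mulr_gt0 lam0 L0; lra.
have := ler_wpM2l lamL1 restart; lra.
Qed.

Lemma lyapunov_nonincreasing (R : realType) (lam L rho M P1 Pk D1y Dk1 Dm : R) :
  0 < lam -> 0 <= D1y -> 0 <= Dk1 -> 0 <= Dm ->
  lam * L < 1 -> rho * (1 + lam * L) < lam * M -> lam * M < 1 ->
  lam * (P1 + M * Dk1) <= lam * (Pk + M * Dm)
    + (- (lam * M - rho * (1 + lam * L)) * Dm - (1 - lam * L) * D1y - (1 - lam * M) * Dk1) ->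
  P1 + M * Dk1 <= Pk + M * Dm.
Proof.
move=> lam0 D1y0 Dk10 Dm0 lamL1 rhoM lamM1 step.
have e1 : 0 <= (lam * M - rho * (1 + lam * L)) * Dm by apply: mulr_ge0 => //; lra.
have e2 : 0 <= (1 - lam * L) * D1y by apply: mulr_ge0 => //; lra.
have e3 : 0 <= (1 - lam * M) * Dk1 by apply: mulr_ge0 => //; lra.
rewrite -(ler_pM2l lam0); lra.
Qed.

Theorem mainTheorem3 (R : realType) (n : nat) (C : set 'rV[R]_n)
  (phi f g : 'rV[R]_n -> \bar R)
  (xkm1 xk xk1 : 'rV[R]_n) (beta : R) (fh : 'rV[R]_n -> \bar R) (L lam : R) :
  open C -> convex_setE C -> C !=set0 ->
  standing C phi f g ->
  econvex g ->
  C xkm1 -> C xk -> 0 <= beta -> beta < 1 ->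
  let yk := xk + beta *: (xk - xkm1) in
  C yk ->
  auxiliary C phi f fh xk ->
  smad C fh phi L ->
  0 < lam ->
  closure C xk1 ->
  (forall x, closure C x ->
     ((dotv (egrad fh yk) (xk1 - yk))%:E + g xk1 + lam^-1%:E * bregE phi xk1 yk
      <= (dotv (egrad fh yk) (x - yk))%:E + g x + lam^-1%:E * bregE phi x yk)%E) ->
  C xk1 ->
  let Psi := (fun x => f x + g x)%E in
  (lam%:E * Psi xk1 <= lam%:E * Psi xk
     + ((1 + lam * L) * breg phi xk yk - (1 - lam * L) * breg phi xk1 yk
        - breg phi xk xk1)%:E)%E /\
  (forall rho : R, 0 < rho -> rho <= 1 ->
     breg phi xk yk <= rho * breg phi xkm1 xk ->
     forall M : R, 0 < M ->
     (lam%:E * (Psi xk1 + (M * breg phi xk xk1)%:E)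
       <= lam%:E * (Psi xk + (M * breg phi xkm1 xk)%:E)
          + (- (lam * M - rho * (1 + lam * L)) * breg phi xkm1 xk
             - (1 - lam * L) * breg phi xk1 yk
             - (1 - lam * M) * breg phi xk xk1)%:E)%E) /\
  (forall rho : R, 0 < rho -> rho <= 1 ->
     breg phi xk yk <= rho * breg phi xkm1 xk ->
     forall M : R, 0 < M ->
     0 < lam * L -> lam * L < 1 ->
     rho * (1 + lam * L) < lam * M -> lam * M < 1 ->
     (Psi xk1 + (M * breg phi xk xk1)%:E
       <= Psi xk + (M * breg phi xkm1 xk)%:E)%E).
Proof.
move=> _ cvxC _ [[[_ [_ [cvx_phi [_ [_ [_ [phi_fin [phi_diff _]]]]]]]] _]
  [_ [_ [_ [f_fin _]]]] [[g_ninfty _] _] _ _] cvx_g Cxkm1 Cxk _ _ yk Cyk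
  [_ [_ [_ [[fh_fin [fh_diff _]] [f_le_fh [fh_eq _]]]]]] smad_fh lam0 _ opt Cxk1 Psi.
have opt_C z (Cz : C z) := opt z (subset_closure Cz).
have [gxk_oo | /negPf gxk_noo] := eqVneq (g xk) +oo%E.
  have Psik : Psi xk = +oo%E by rewrite /Psi gxk_oo -(fineK (f_fin _ Cxk)) addey.
  by split; [|split] => *; rewrite Psik ?addye // ?gt0_muley ?lte_fin // ?addye // leey.
have gxk_fin : g xk \is a fin_num by rewrite fin_numE g_ninfty gxk_noo.
have gxk1_fin : g xk1 \is a fin_num.
  rewrite fin_numE g_ninfty /=; apply/eqP => gxk1_oo; move: (opt_C xk Cxk).
  by rewrite gxk1_oo !(bregE_fin phi_fin) // -(fineK gxk_fin) addey // addye.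
have step := inertial_step_descent cvxC phi_fin phi_diff smad_fh fh_diff cvx_g g_ninfty
  lam0 Cyk Cxk Cxk1 gxk_fin gxk1_fin (fine_le (f_fin _ Cxk1) (fh_fin _ Cxk1) (f_le_fh _ Cxk1))
  (congr1 fine fh_eq) opt_C.
have PsiE x : C x -> g x \is a fin_num -> Psi x = (fine (f x) + fine (g x))%:E.
  by move=> Cx gx_fin; rewrite /Psi EFinD !fineK // f_fin.
rewrite !PsiE //; split; [|split].
- by rewrite -EFinM -EFinD lee_fin.
- move=> rho _ _ restart M _; rewrite -!EFinD -!EFinM -?EFinD lee_fin.
  exact: lyapunov_step lam0 (proj1 smad_fh) restart step.
- move=> rho _ _ restart M _ _ lamL1 rhoM lamM1; rewrite -!EFinD lee_fin.
  apply: (lyapunov_nonincreasing lam0 _ _ _ lamL1 rhoM lamM1);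
    last exact: lyapunov_step lam0 (proj1 smad_fh) restart step.
  all: exact: (breg_ge0 cvxC phi_fin phi_diff cvx_phi).
Qed.
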